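(* Consider $N$ agents $\mathcal{V}=\{1,\dots,N\}$ interacting over a fixed graph in which agent $i$ has the nonempty neighbor set $\mathcal{N}_i$ of cardinality $n_i$. Let $\beta\in[0,1]$ and let $(q_p(k))_{k\ge0}$ be a sequence with values in $\{-1,1\}$. The opinions evolve by $$\theta_i(k+1)=\theta_i(k)+\bigl(1-\theta_i(k)^2\bigr)\Bigl[\beta\bigl(q_p(k)-\theta_i(k)\bigr)+(1-\beta)\frac{1}{n_i}\sum_{j\in\mathcal{N}_i}\bigl(q_j(k)-\theta_i(k)\bigr)\Bigr],$$ with actions $q_j(k)=1$ if $\theta_j(k)>0$ or ($\theta_j(k)=0$ and $q_j(k-1)=1$), and $q_j(k)=-1$ if $\theta_j(k)<0$ or ($\theta_j(k)=0$ and $q_j(k-1)=-1$). Let $f_i(k)=(1-\beta)\frac{n_i^+(k)-n_i^-(k)}{n_i}+\beta q_p(k)$, where $n_i^{\pm}(k)=|\{j\in\mathcal{N}_i:q_j(k)=\pm1\}|$. Let $i\in\mathcal{V}$ with $\theta_i(0)\in(-1,1)$. Then for every $k$: 1. if $f_i(k)\ge 0$ and $q_i(k)=1$, then $q_i(k+1)=1$; 2. if $f_i(k)\le 0$ and $q_i(k)=-1$, then $q_i(k+1)=-1$.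
   Context: Opinions take values in $[-1,1]$. The neighbor set $\mathcal{N}_i$ consists of the agents $j$ with $(j,i)$ an edge of the graph. *)

From mathcomp Require Import all_boot all_order all_algebra.
Set Implicit Arguments. Unset Strict Implicit. Unset Printing Implicit Defensive.
Import Order.TTheory GRing.Theory Num.Theory.
Local Open Scope ring_scope.

Definition nbrs (N : nat) (e : rel 'I_N) (i : 'I_N) : {set 'I_N} :=
  [set j | e j i].

Definition ndeg (N : nat) (e : rel 'I_N) (i : 'I_N) : nat := #|nbrs e i|.

Definition nplus (R : numDomainType) (N : nat) (e : rel 'I_N)
  (qk : 'I_N -> R) (i : 'I_N) : nat := #|[set j in nbrs e i | qk j == 1]|.
Definition nminus (R : numDomainType) (N : nat) (e : rel 'I_N)
  (qk : 'I_N -> R) (i : 'I_N) : nat := #|[set j in nbrs e i | qk j == -1]|.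

Definition fi (R : numFieldType) (N : nat) (e : rel 'I_N) (beta : R)
  (qp : nat -> R) (q : nat -> 'I_N -> R) (i : 'I_N) (k : nat) : R :=
  (1 - beta) * ((nplus e (q k) i)%:R - (nminus e (q k) i)%:R) / (ndeg e i)%:R
  + beta * qp k.

Definition step (R : numFieldType) (N : nat) (e : rel 'I_N) (beta : R)
  (qp : nat -> R) (theta q : nat -> 'I_N -> R) (i : 'I_N) (k : nat) : R :=
  theta k i + (1 - theta k i ^+ 2) *
    (beta * (qp k - theta k i)
     + (1 - beta) * ((ndeg e i)%:R^-1 * \sum_(j in nbrs e i) (q k j - theta k i))).

(* The update has the form [theta' = u(theta, f)] with [u(t, g) = t + (1 - t^2) (g - t)],
   where [f] is the influence [f_i(k)].  For [t] and [g] in [[-1, 1]], [u(t, g)] stays in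
   [[-1, 1]], and [u(t, g) >= 0] whenever [t >= 0] and [g >= 0]: the term [t - (1 - t^2) t]
   equals [t^3].  An agent playing [1] has a nonnegative opinion, which therefore stays
   nonnegative under a nonnegative influence, and a zero opinion keeps the previous action.
   The case of [-1] follows from the symmetry [u(-t, -g) = - u(t, g)]. *)
From mathcomp Require Import all_boot all_order all_algebra.
From mathcomp Require Import ring lra.
Set Implicit Arguments. Unset Strict Implicit. Unset Printing Implicit Defensive.
Import Order.TTheory GRing.Theory Num.Theory.
Local Open Scope ring_scope.

Definition opinion_update (R : pzRingType) (t g : R) : R := t + (1 - t ^+ 2) * (g - t).

Lemma opinion_updateN (R : comPzRingType) (t g : R) :
  opinion_update (- t) (- g) = - opinion_update t g.
Proof. by rewrite /opinion_update; ring. Qed.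

Lemma opinion_update_bound (R : realFieldType) (t g : R) :
  -1 <= t <= 1 -> -1 <= g <= 1 -> -1 <= opinion_update t g <= 1.
Proof.
move=> /andP [t0 t1] /andP [g0 g1]; rewrite /opinion_update.
have h : 0 <= 1 - t ^+ 2 by nra.
have ha : 0 <= 1 - g by lra.
have hb : 0 <= g + 1 by lra.
have ta : 0 <= 1 - t by lra.
have tb : 0 <= t + 1 by lra.
have := mulr_ge0 h ha; have := mulr_ge0 h hb.
have := mulr_ge0 (mulr_ge0 ta ta) tb; have := mulr_ge0 (mulr_ge0 tb tb) ta.
by move=> ? ? ? ?; apply/andP; split; nra.
Qed.

Lemma opinion_update_ge0 (R : realFieldType) (t g : R) :
  0 <= t <= 1 -> 0 <= g -> 0 <= opinion_update t g.
Proof.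
move=> /andP [t0 t1] g0; rewrite /opinion_update.
have h : 0 <= 1 - t ^+ 2 by nra.
have := mulr_ge0 h g0; have := mulr_ge0 (mulr_ge0 t0 t0) t0.
by move=> ? ?; nra.
Qed.

Lemma opinion_update_le0 (R : realFieldType) (t g : R) :
  -1 <= t <= 0 -> g <= 0 -> opinion_update t g <= 0.
Proof.
move=> /andP [t0 t1] g0.
rewrite -oppr_ge0 -opinion_updateN; apply: opinion_update_ge0; last by rewrite oppr_ge0.
by rewrite oppr_ge0 t1 lerNl.
Qed.

Lemma sum_pm1 (R : numDomainType) (T : finType) (A : {set T}) (x : T -> R) :
  (forall j, x j = 1 \/ x j = -1) ->
  \sum_(j in A) x j =
    #|[set j in A | x j == 1]|%:R - #|[set j in A | x j == -1]|%:R.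
Proof.
move=> hx; rewrite -!sum1_card !natr_sum.
rewrite big_mkcond [X in _ = X - _]big_mkcond [X in _ = _ - X]big_mkcond /=.
rewrite -sumrB; apply: eq_bigr => j _; rewrite !inE.
case: (j \in A) => /=; last by rewrite subrr.
have h1 : (1 == -1 :> R) = false by apply/negbTE; rewrite -addr_eq0 -mulr2n pnatr_eq0.
by case: (hx j) => ->; rewrite ?h1 ?(eq_sym (-1)) ?h1 eqxx /= ?subr0 ?sub0r.
Qed.

Lemma mean_bound (R : realFieldType) (T : finType) (A : {set T}) (x : T -> R) :
  (0 < #|A|)%N -> (forall j, -1 <= x j <= 1) ->
  -1 <= (\sum_(j in A) x j) / #|A|%:R <= 1.
Proof.
move=> hA hx; have hA' : 0 < #|A|%:R :> R by rewrite ltr0n.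
have : `|\sum_(j in A) x j| <= #|A|%:R.
  apply: le_trans (ler_norm_sum _ _ _) _.
  rewrite -sum1_card natr_sum; apply: ler_sum => j _.
  by rewrite ler_norml.
rewrite ler_norml => /andP [h1 h2].
by rewrite ler_pdivlMr // ler_pdivrMr // mulN1r mul1r h1 h2.
Qed.

Lemma convex_comb_bound (R : realFieldType) (b p x : R) :
  0 <= b <= 1 -> -1 <= p <= 1 -> -1 <= x <= 1 -> -1 <= b * p + (1 - b) * x <= 1.
Proof.
move=> /andP [b0 b1] /andP [p0 p1] /andP [x0 x1].
have hb : 0 <= 1 - b by lra.
have hp1 : 0 <= 1 - p by lra.
have hp2 : 0 <= p + 1 by lra.
have hx1 : 0 <= 1 - x by lra.
have hx2 : 0 <= x + 1 by lra.
have := mulr_ge0 b0 hp1; have := mulr_ge0 b0 hp2.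
have := mulr_ge0 hb hx1; have := mulr_ge0 hb hx2.
by move=> ? ? ? ?; apply/andP; split; nra.
Qed.

Section OpinionDynamics.

Variables (R : realFieldType) (N : nat) (e : rel 'I_N) (beta : R) (qp : nat -> R).
Variables (theta q : nat -> 'I_N -> R).

Hypothesis ndeg_gt0 : forall a, (0 < ndeg e a)%N.
Hypothesis beta_01 : 0 <= beta <= 1.
Hypothesis qp_pm1 : forall k, qp k = 1 \/ qp k = -1.
Hypothesis theta0_bound : forall a, -1 <= theta 0%N a <= 1.
Hypothesis thetaS : forall k a, theta k.+1 a = step e beta qp theta q a k.
Hypothesis q_pm1 : forall k a, q k a = 1 \/ q k a = -1.
Hypothesis q_theta_gt0 : forall k a, 0 < theta k a -> q k a = 1.
Hypothesis q_theta_lt0 : forall k a, theta k a < 0 -> q k a = -1.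
Hypothesis q_theta_eq0 : forall k a, theta k.+1 a = 0 -> q k.+1 a = q k a.

Lemma fiE k a :
  fi e beta qp q a k = beta * qp k + (1 - beta) * ((\sum_(j in nbrs e a) q k j) / (ndeg e a)%:R).
Proof. by rewrite /fi /nplus /nminus sum_pm1 // mulrA addrC. Qed.

Lemma fi_bound k a : -1 <= fi e beta qp q a k <= 1.
Proof.
rewrite fiE; apply: convex_comb_bound => //; last first.
  by apply: mean_bound => [|j]; [exact: ndeg_gt0 | case: (q_pm1 k j) => ->; lra].
by case: (qp_pm1 k) => ->; lra.
Qed.

Lemma thetaSE k a : theta k.+1 a = opinion_update (theta k a) (fi e beta qp q a k).
Proof.
have hn : (ndeg e a)%:R != 0 :> R by rewrite pnatr_eq0 -lt0n.
rewrite thetaS fiE /step /opinion_update sumrB sumr_const -/(ndeg e a) -mulr_natr.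
by field.
Qed.

Lemma theta_bound k a : -1 <= theta k a <= 1.
Proof.
elim: k a => [|k IH] a; first exact: theta0_bound.
by rewrite thetaSE; apply: opinion_update_bound; [exact: IH | exact: fi_bound].
Qed.

Lemma q1_theta_ge0 k a : q k a = 1 -> 0 <= theta k a.
Proof.
move=> hq; rewrite leNgt; apply/negP => /q_theta_lt0; rewrite hq => /eqP.
by rewrite -subr_eq0 opprK -mulr2n pnatr_eq0.
Qed.

Lemma qN1_theta_le0 k a : q k a = -1 -> theta k a <= 0.
Proof.
move=> hq; rewrite leNgt; apply/negP => /q_theta_gt0; rewrite hq => /eqP.
by rewrite eq_sym -subr_eq0 opprK -mulr2n pnatr_eq0.
Qed.

Lemma q1_persists k a : 0 <= fi e beta qp q a k -> q k a = 1 -> q k.+1 a = 1.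
Proof.
move=> hf hq.
have : 0 <= theta k.+1 a.
  rewrite thetaSE; apply: opinion_update_ge0 => //.
  by rewrite q1_theta_ge0 //; case/andP: (theta_bound k a).
rewrite le_eqVlt => /orP [/eqP h | /q_theta_gt0 //].
by rewrite q_theta_eq0 // -h.
Qed.

Lemma qN1_persists k a : fi e beta qp q a k <= 0 -> q k a = -1 -> q k.+1 a = -1.
Proof.
move=> hf hq.
have : theta k.+1 a <= 0.
  rewrite thetaSE; apply: opinion_update_le0 => //.
  by rewrite qN1_theta_le0 // andbT; case/andP: (theta_bound k a).
rewrite le_eqVlt => /orP [/eqP h | /q_theta_lt0 //].
by rewrite q_theta_eq0 // hq.
Qed.

End OpinionDynamics.

Theorem mainTheorem3 (R : realFieldType) (N : nat) (e : rel 'I_N)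
  (beta : R) (qp : nat -> R) (theta q : nat -> 'I_N -> R) (i : 'I_N) :
  (* every neighbor set is nonempty *)
  (forall a : 'I_N, 0 < ndeg e a)%N ->
  0 <= beta <= 1 ->
  (forall k, qp k = 1 \/ qp k = -1) ->
  (* initial opinions lie in [-1,1] *)
  (forall a : 'I_N, -1 <= theta 0%N a <= 1) ->
  (* opinion dynamics *)
  (forall k a, theta k.+1 a = step e beta qp theta q a k) ->
  (* action rule *)
  (forall k a, q k a = 1 \/ q k a = -1) ->
  (forall k a, 0 < theta k a -> q k a = 1) ->
  (forall k a, theta k a < 0 -> q k a = -1) ->
  (forall k a, theta k.+1 a = 0 -> q k.+1 a = q k a) ->
  -1 < theta 0%N i < 1 ->
  forall k : nat,
    (0 <= fi e beta qp q i k -> q k i = 1 -> q k.+1 i = 1) /\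
    (fi e beta qp q i k <= 0 -> q k i = -1 -> q k.+1 i = -1).
Proof.
move=> hn hb hqp h0 hstep hq hpos hneg hzero _ k.
by split; [apply: q1_persists | apply: qN1_persists].
Qed.
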